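(* Let $\mathcal{F}_c^=$ and $\mathcal{S}_c^=$ be as defined in the context. Then $\operatorname{conv}(\mathcal{F}_c^=)=\operatorname{proj}_{(z,\mathbf{x})}\operatorname{conv}(\mathcal{S}_c^=)$.
   Context: Let $m\ge1$, $M=\{1,\dots,m\}$, $p\in\{1,\dots,m\}$, and $h_1\ge h_2\ge\dots\ge h_m\ge0$. The mixing set with a cardinality constraint is $\mathcal{F}_c^==\{(z,\mathbf{x})\in\mathbb{R}_+\times\{0,1\}^m : x_i=0\Rightarrow z\ge h_i\ \forall i\in M,\ \mathbf{1}^\top\mathbf{x}\le p\}$. Let $\Xi_c^==\{(z,\mathbf{x})\in\mathbb{R}_+\times\mathbb{R}^m_+ : \mathbf{x}\le\mathbf{1},\ \mathbf{1}^\top\mathbf{x}\le p\}$ and $\Delta_m=\{\mathbf{y}\in\mathbb{Z}^m_+:\mathbf{1}^\top\mathbf{y}\le1\}$. The set $\mathcal{S}_c^=$ is the set of $(z,\mathbf{x};\mathbf{y})\in\Xi_c^=\times\Delta_m$ satisfying: $(1-x_i)(1-\mathbf{1}^\top\mathbf{y})\ge0$ and $-(1-x_i)(1-\mathbf{1}^\top\mathbf{y})\ge0$ for all $i\in M$; $zy_i-h_iy_i\ge0$ for all $i\in M$; $-x_iy_i\ge0$ for all $i\in M$; $-(1-x_i)y_j\ge0$ for all $i,j\in M$ with $i<j$. *)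

From HB Require Import structures.
From mathcomp Require Import all_boot all_order all_algebra.
Set Implicit Arguments. Unset Strict Implicit. Unset Printing Implicit Defensive.
Import Order.TTheory GRing.Theory Num.Theory.
Local Open Scope ring_scope.

Definition conv (R : numDomainType) (V : lmodType R) (S : V -> Prop) : V -> Prop :=
  fun v => exists (n : nat) (w : 'I_n -> R) (pt : 'I_n -> V),
    (forall k, 0 <= w k) /\ \sum_(k < n) w k = 1 /\
    (forall k, S (pt k)) /\ v = \sum_(k < n) w k *: pt k.

Definition pt_zx (R : numDomainType) (m : nat) := (R^o * 'rV[R]_m)%type.
Definition pt_zxy (R : numDomainType) (m : nat) := (R^o * 'rV[R]_m * 'rV[R]_m)%type.

Definition Fc (R : numDomainType) (m p : nat) (h : 'I_m -> R) : pt_zx R m -> Prop :=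
  fun zx => let (z, x) := zx in
    0 <= z /\
    (forall i, x 0 i = 0 \/ x 0 i = 1) /\
    (forall i, x 0 i = 0 -> h i <= z) /\
    \sum_(i < m) x 0 i <= p%:R.

Definition Xic (R : numDomainType) (m p : nat) (z : R) (x : 'rV[R]_m) : Prop :=
  0 <= z /\ (forall i, 0 <= x 0 i) /\ (forall i, x 0 i <= 1) /\
  \sum_(i < m) x 0 i <= p%:R.

Definition Deltam (R : numDomainType) (m : nat) (y : 'rV[R]_m) : Prop :=
  (forall i, exists k : nat, y 0 i = k%:R) /\ \sum_(i < m) y 0 i <= 1.

Definition Sc (R : numDomainType) (m p : nat) (h : 'I_m -> R) : pt_zxy R m -> Prop :=
  fun zxy => let: (z, x, y) := zxy in
    Xic p z x /\ Deltam y /\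
    (forall i, (1 - x 0 i) * (1 - \sum_(j < m) y 0 j) >= 0) /\
    (forall i, - ((1 - x 0 i) * (1 - \sum_(j < m) y 0 j)) >= 0) /\
    (forall i, z * y 0 i - h i * y 0 i >= 0) /\
    (forall i, - (x 0 i * y 0 i) >= 0) /\
    (forall i j : 'I_m, (i < j)%N -> - ((1 - x 0 i) * y 0 j) >= 0).

From mathcomp Require Import all_boot all_order all_algebra.
From mathcomp Require Import ring lra.
Set Implicit Arguments.
Unset Strict Implicit.
Unset Printing Implicit Defensive.
Import Order.TTheory GRing.Theory Num.Theory.
Local Open Scope ring_scope.

(* A point (z, x) of the projection of S_c^= satisfies the relaxation of F_c^=
   in which x ranges over [0,1]^m, and x_i < 1 still forces z >= h_i: if x_i < 1
   the equality constraints force 1^T y = 1, so some y_k = 1, and then z >= h_k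
   while x_j = 1 for all j < k, whence k <= i and h_i <= h_k.  For fixed z this
   relaxation is an integral polytope: pipage rounding, which moves mass between
   two fractional coordinates (or rounds a lone fractional coordinate, using the
   integrality of p), writes every point as a convex combination of points with
   fewer fractional coordinates.  Conversely a point of F_c^= lifts to S_c^= by
   taking for y the indicator of the first coordinate where x vanishes. *)

Section ConvexHull.
Variables (R : numFieldType) (V : lmodType R).
Implicit Types (S : V -> Prop) (u v : V).

Lemma mem_conv S v : S v -> conv S v.
Proof.
move=> Sv; exists 1%N, (fun _ => 1), (fun _ => v).
by rewrite !big_ord1 scale1r.
Qed.

Lemma conv_convex S u v a :
  0 <= a -> a <= 1 -> conv S u -> conv S v -> conv S (a *: u + (1 - a) *: v).
Proof.
move=> a0 a1 [n1 [w1 [p1 [w1_ge0 [w1_sum [p1S ->]]]]]].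
move=> [n2 [w2 [p2 [w2_ge0 [w2_sum [p2S ->]]]]]].
have splitl (i : 'I_n1) : split (lshift n2 i) = inl i := unsplitK (inl i).
have splitr (i : 'I_n2) : split (rshift n1 i) = inr i := unsplitK (inr i).
exists (n1 + n2)%N,
  (fun k => match split k with inl i => a * w1 i | inr j => (1 - a) * w2 j end),
  (fun k => match split k with inl i => p1 i | inr j => p2 j end).
split; [|split; [|split]].
- by move=> k; case: split => i; rewrite mulr_ge0 ?subr_ge0.
- transitivity (a * \sum_i w1 i + (1 - a) * \sum_i w2 i).
    rewrite big_split_ord !mulr_sumr.
    by congr (_ + _); apply: eq_bigr => i _; rewrite ?splitl ?splitr.
  by rewrite w1_sum w2_sum !mulr1 addrC subrK.
- by move=> k; case: split.
- rewrite big_split_ord !scaler_sumr.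
  by congr (_ + _); apply: eq_bigr => i _; rewrite ?splitl ?splitr scalerA.
Qed.

Lemma conv_sum_conv S n (w : 'I_n -> R) (pt : 'I_n -> V) :
  (forall k, 0 <= w k) -> \sum_k w k = 1 -> (forall k, conv S (pt k)) ->
  conv S (\sum_k w k *: pt k).
Proof.
elim: n w pt => [|n IH] w pt w_ge0 + ptS.
  by rewrite big_ord0 => /eqP; rewrite eq_sym oner_eq0.
rewrite !big_ord_recr /=.
set s := \sum_(i < n) w (widen_ord (leqnSn n) i) => w_sum.
have s_ge0 : 0 <= s by apply: sumr_ge0.
have [s0|s_neq0] := eqVneq s 0.
  rewrite big1 ?add0r; last first.
    by move=> i _; rewrite (psumr_eq0P (fun i _ => w_ge0 _) s0) // scale0r.
  by rewrite -[w _]add0r -s0 w_sum scale1r.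
have -> : w ord_max = 1 - s by rewrite -w_sum addrAC subrr add0r.
have -> : \sum_(i < n) w (widen_ord (leqnSn n) i) *: pt (widen_ord (leqnSn n) i)
    = s *: \sum_(i < n) (w (widen_ord (leqnSn n) i) / s) *: pt (widen_ord (leqnSn n) i).
  rewrite scaler_sumr; apply: eq_bigr => i _; rewrite scalerA mulrCA mulfV //.
  by rewrite mulr1.
apply: conv_convex => //; first by rewrite -w_sum lerDl.
by apply: IH => // [k|]; [rewrite divr_ge0 | rewrite -mulr_suml mulfV].
Qed.

End ConvexHull.

Section ConvexHullProduct.
Variables (R : numFieldType) (V W : lmodType R).

Lemma sum_pair n (F : 'I_n -> V * W) :
  \sum_k F k = (\sum_k (F k).1, \sum_k (F k).2).
Proof.
elim: n F => [|n IH] F; first by rewrite !big_ord0.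
by rewrite !big_ord_recr /= IH.
Qed.

Lemma conv_lift (T : V -> Prop) (S : V * W -> Prop) (g : V -> W) :
  (forall v, T v -> S (v, g v)) -> forall v, conv T v -> exists w, conv S (v, w).
Proof.
move=> TS v [n [c [pt [c_ge0 [c_sum [Tpt ->]]]]]].
exists (\sum_k c k *: g (pt k)), n, c, (fun k => (pt k, g (pt k))).
do !split => //; first by move=> k; exact: TS.
by rewrite sum_pair.
Qed.

Lemma conv_proj (T : V -> Prop) (S : V * W -> Prop) :
  (forall v w, S (v, w) -> conv T v) -> forall v w, conv S (v, w) -> conv T v.
Proof.
move=> ST v w [n [c [pt [c_ge0 [c_sum [Spt E]]]]]].
have -> : v = \sum_k c k *: (pt k).1 by rewrite -[v]/((v, w).1) E sum_pair.
apply: conv_sum_conv => // k.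
by move: (Spt k); case: (pt k) => v' w'; exact: ST.
Qed.

End ConvexHullProduct.

Lemma unit_interval_nonfrac (R : realDomainType) (v : R) :
  0 <= v -> v <= 1 -> ~~ (0 < v < 1) -> v = 0 \/ v = 1.
Proof.
move=> v_ge0 v_le1; rewrite negb_and -!leNgt => /orP [v_le0|v_ge1].
  by left; apply/le_anti; rewrite v_le0 v_ge0.
by right; apply/le_anti; rewrite v_ge1 v_le1.
Qed.

Section MixingSet.
Variables (R : realFieldType) (m p : nat) (h : 'I_m -> R).
Hypothesis h_antitone : forall i j : 'I_m, (i <= j)%N -> h j <= h i.
Implicit Types (z a b lam : R) (x y : 'rV[R]_m) (i j k l : 'I_m).

Definition frac x : pred 'I_m := [pred k | 0 < x 0 k < 1].

Definition Fc_relax z x :=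
  [/\ 0 <= z, forall i, 0 <= x 0 i, forall i, x 0 i <= 1,
      \sum_i x 0 i <= p%:R & forall i, x 0 i != 1 -> h i <= z].

Lemma Fc_relax_integral z x :
  Fc_relax z x -> (forall k, ~~ frac x k) -> Fc p h ((z, x) : pt_zx R m).
Proof.
move=> [z_ge0 x_ge0 x_le1 x_sum x_h] x_int.
split=> //; split=> [i|]; first exact: unit_interval_nonfrac (x_ge0 i) (x_le1 i) (x_int i).
by split=> // i xi0; apply: x_h; rewrite xi0 eq_sym oner_eq0.
Qed.

Definition row_upd2 x i j a b : 'rV[R]_m :=
  \row_k (if k == i then a else if k == j then b else x 0 k).

Lemma row_upd2E x i j a b k :
  row_upd2 x i j a b 0 k = if k == i then a else if k == j then b else x 0 k.
Proof. by rewrite mxE. Qed.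

Lemma sum_row_upd2 x i j a b : j != i ->
  \sum_k row_upd2 x i j a b 0 k = \sum_k x 0 k + (a - x 0 i) + (b - x 0 j).
Proof.
move=> ji; rewrite (bigD1 i) // (bigD1 j) //= [in RHS](bigD1 i) // [in RHS](bigD1 j) //=.
rewrite !row_upd2E eqxx (negbTE ji) eqxx.
under eq_bigr => k /andP [ki kj] do rewrite row_upd2E (negbTE ki) (negbTE kj).
ring.
Qed.

Lemma sum_row_upd1 x i a :
  \sum_k row_upd2 x i i a a 0 k = \sum_k x 0 k + (a - x 0 i).
Proof.
rewrite (bigD1 i) //= [in RHS](bigD1 i) //= row_upd2E eqxx.
under eq_bigr => k ki do rewrite row_upd2E (negbTE ki).
ring.
Qed.

Lemma Fc_relax_upd2 z x i j a b :
  Fc_relax z x -> frac x i -> frac x j -> 0 <= a -> a <= 1 -> 0 <= b -> b <= 1 ->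
  \sum_k row_upd2 x i j a b 0 k <= p%:R -> Fc_relax z (row_upd2 x i j a b).
Proof.
move=> [z_ge0 x_ge0 x_le1 _ x_h] /andP [_ xi_lt1] /andP [_ xj_lt1] a0 a1 b0 b1 s.
split=> // k; rewrite row_upd2E.
- by case: ifP => _ //; case: ifP.
- by case: ifP => _ //; case: ifP.
- case: ifP => [/eqP -> _|_]; first by apply: x_h; rewrite lt_eqF.
  case: ifP => [/eqP -> _|_]; first by apply: x_h; rewrite lt_eqF.
  exact: x_h.
Qed.

Lemma card_frac_upd2 x i j a b l :
  frac x i -> frac x j -> frac x l -> ~~ frac (row_upd2 x i j a b) l ->
  (#|frac (row_upd2 x i j a b)| < #|frac x|)%N.
Proof.
move=> fi fj fl nfl; apply: proper_card; apply/properP; split; last by exists l.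
apply/subsetP => k; rewrite !inE row_upd2E.
by case: ifP => [/eqP -> //|_]; case: ifP => [/eqP -> //|_].
Qed.

Lemma conv_Fc_comb z x x1 x2 lam :
  0 <= lam -> lam <= 1 -> (forall k, x 0 k = lam * x1 0 k + (1 - lam) * x2 0 k) ->
  conv (Fc p h) ((z, x1) : pt_zx R m) -> conv (Fc p h) ((z, x2) : pt_zx R m) ->
  conv (Fc p h) ((z, x) : pt_zx R m).
Proof.
move=> lam0 lam1 x_comb c1 c2.
have -> : ((z, x) : pt_zx R m) =
    lam *: ((z, x1) : pt_zx R m) + (1 - lam) *: ((z, x2) : pt_zx R m).
  change ((z, x) = (lam * z + (1 - lam) * z, lam *: x1 + (1 - lam) *: x2)).
  by congr (_, _); [ring | apply/rowP => k; rewrite !mxE x_comb].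
exact: conv_convex.
Qed.

Section PipageRounding.
Variables (z : R) (x : 'rV[R]_m).
Hypothesis x_relax : Fc_relax z x.

Lemma conv_Fc_round1 i :
  frac x i -> (forall k, k != i -> ~~ frac x k) -> conv (Fc p h) ((z, x) : pt_zx R m).
Proof.
move=> fi x_int; have [_ x_ge0 x_le1 x_sum _] := x_relax.
have /andP [xi_gt0 xi_lt1] := fi.
have xk01 k : k != i -> x 0 k = (x 0 k == 1)%:R.
  move=> ki; case: (unit_interval_nonfrac (x_ge0 k) (x_le1 k) (x_int k ki)) => ->.
    by rewrite eq_sym oner_eq0.
  by rewrite eqxx.
set c := (\sum_(k | k != i) nat_of_bool (x 0%R k == 1%R))%N.
have sum_x : \sum_k x 0 k = x 0 i + c%:R.
  rewrite (bigD1 i) //= natr_sum; congr (_ + _).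
  by apply: eq_bigr => k ki; rewrite -xk01.
(* integrality of p: rounding x_i up keeps the cardinality constraint *)
have c_lt_p : (c < p)%N by rewrite -(ltr_nat R); move: x_sum; rewrite sum_x; lra.
have c1_le_p : c%:R + 1 <= p%:R :> R by rewrite natr1 ler_nat.
have rounded a : a = 0 \/ a = 1 -> Fc p h ((z, row_upd2 x i i a a) : pt_zx R m).
  move=> a01; apply: Fc_relax_integral.
    apply: Fc_relax_upd2 => //; try by case: a01 => ->; lra.
    by rewrite sum_row_upd1 sum_x; case: a01 => ->; lra.
  move=> k; rewrite /frac inE row_upd2E.
  case: eqP => [_|/eqP ki]; last exact: x_int.
  by case: a01 => ->; rewrite ltxx ?andbF.
apply: (@conv_Fc_comb _ _ (row_upd2 x i i 1 1) (row_upd2 x i i 0 0) (x 0 i)).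
- lra.
- lra.
- by move=> k; rewrite !row_upd2E; case: eqP => [->|_]; ring.
- by apply/mem_conv/rounded; right.
- by apply/mem_conv/rounded; left.
Qed.

Hypothesis IH : forall x', (#|frac x'| < #|frac x|)%N ->
  Fc_relax z x' -> conv (Fc p h) ((z, x') : pt_zx R m).

Lemma conv_Fc_round2_step i j a b : frac x i -> frac x j -> j != i ->
  0 <= a -> a <= 1 -> 0 <= b -> b <= 1 -> a + b = x 0 i + x 0 j ->
  [\/ a = 0, a = 1, b = 0 | b = 1] ->
  conv (Fc p h) ((z, row_upd2 x i j a b) : pt_zx R m).
Proof.
move=> fi fj ji a0 a1 b0 b1 ab ab01.
have [l fl nfl] : exists2 l, frac x l & ~~ frac (row_upd2 x i j a b) l.
  by case: ab01 => ->; [exists i|exists i|exists j|exists j];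
     rewrite // /frac inE row_upd2E eqxx ?(negbTE ji) ltxx ?andbF.
apply: IH; first exact: card_frac_upd2 fi fj fl nfl.
apply: Fc_relax_upd2 => //; rewrite sum_row_upd2 //.
by have [_ _ _ x_sum _] := x_relax; lra.
Qed.

Lemma conv_Fc_round2 i j :
  frac x i -> frac x j -> j != i -> conv (Fc p h) ((z, x) : pt_zx R m).
Proof.
move=> fi fj ji; have step := conv_Fc_round2_step fi fj ji.
move: fi fj => /andP [xi_gt0 xi_lt1] /andP [xj_gt0 xj_lt1].
have [s_le1|s_gt1] := lerP (x 0 i + x 0 j) 1.
  have s_neq0 : x 0 i + x 0 j != 0 by apply/eqP; lra.
  apply: (@conv_Fc_comb _ _ (row_upd2 x i j (x 0 i + x 0 j) 0)
    (row_upd2 x i j 0 (x 0 i + x 0 j)) (x 0 i / (x 0 i + x 0 j))).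
  - by rewrite divr_ge0 //; lra.
  - by rewrite ler_pdivrMr ?mul1r; lra.
  - move=> k; rewrite !row_upd2E.
    by case: eqP => [->|_]; [field | case: eqP => [->|_]; [field | ring]].
  - by apply: step => //; try lra; constructor 3.
  - by apply: step => //; try lra; constructor 1.
have d_neq0 : 2 - x 0 i - x 0 j != 0 by apply/eqP; lra.
apply: (@conv_Fc_comb _ _ (row_upd2 x i j 1 (x 0 i + x 0 j - 1))
  (row_upd2 x i j (x 0 i + x 0 j - 1) 1) ((1 - x 0 j) / (2 - x 0 i - x 0 j))).
- by rewrite divr_ge0 //; lra.
- by rewrite ler_pdivrMr ?mul1r; lra.
- move=> k; rewrite !row_upd2E.
  by case: eqP => [->|_]; [field | case: eqP => [->|_]; [field | ring]].
- by apply: step => //; try lra; constructor 2.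
- by apply: step => //; try lra; constructor 4.
Qed.

End PipageRounding.

Lemma Fc_relax_conv_Fc z x : Fc_relax z x -> conv (Fc p h) ((z, x) : pt_zx R m).
Proof.
have [N] := ubnP #|frac x|; elim: N x => // N IH x; rewrite ltnS => card_x x_relax.
case: (pickP (frac x)) => [i fi|x_int]; last first.
  by apply/mem_conv/Fc_relax_integral => // k; rewrite x_int.
case: (pickP (fun j => (j != i) && frac x j)) => [j /andP [ji fj]|x_single].
  apply: (conv_Fc_round2 x_relax _ fi fj ji) => x' card_x' x'_relax.
  by apply: IH => //; exact: leq_trans card_x' card_x.
apply: (conv_Fc_round1 x_relax fi) => k ki.
by move: (x_single k); rewrite ki => /negbT.
Qed.

Definition is_first_zero x i :=
  (x 0 i == 0) && [forall j : 'I_m, (j < i)%N ==> (x 0 j == 1)].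

Definition first_zero x : 'rV[R]_m := \row_i (is_first_zero x i)%:R.

Lemma first_zero_uniq x i k : is_first_zero x i -> is_first_zero x k -> i = k.
Proof.
have before i' j : is_first_zero x i' -> (j < i')%N -> x 0 j == 1.
  by case/andP => _ /forallP /(_ j) /implyP.
move=> fzi fzk; case: (ltngtP i k) => [ik|ki|/val_inj //].
  by have := before _ _ fzk ik; case/andP: fzi => /eqP -> ; rewrite eq_sym oner_eq0.
by have := before _ _ fzi ki; case/andP: fzk => /eqP -> ; rewrite eq_sym oner_eq0.
Qed.

Lemma sum_first_zero x : (forall i, x 0 i = 0 \/ x 0 i = 1) ->
  \sum_i first_zero x 0 i = [exists i, x 0 i == 0]%:R.
Proof.
move=> x01; case: existsP => [[i xi0]|x_ones]; last first.
  rewrite big1 // => i _; rewrite mxE; apply/eqP; rewrite pnatr_eq0 eqb0.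
  by apply/negP => /andP [xi0 _]; apply: x_ones; exists i.
case: (@arg_minnP _ i (fun k => x 0 k == 0) val xi0) => k xk0 k_min.
have fzk : is_first_zero x k.
  rewrite /is_first_zero xk0; apply/forallP => j; apply/implyP => jk.
  case: (x01 j) => [/eqP xj0|->]; last by [].
  by have := k_min j xj0; rewrite leqNgt jk.
rewrite (bigD1 k) //= big1 ?addr0 => [|j jk]; first by rewrite mxE fzk.
rewrite mxE; apply/eqP; rewrite pnatr_eq0 eqb0.
by apply: contra jk => fzj; rewrite (first_zero_uniq fzj fzk).
Qed.

Lemma Fc_lift_Sc z x :
  Fc p h ((z, x) : pt_zx R m) -> Sc p h ((z, x, first_zero x) : pt_zxy R m).
Proof.
case=> z_ge0 [x01 [x_h x_sum]].
have yE i : first_zero x 0 i = (is_first_zero x i)%:R by rewrite mxE.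
have fz0 i : is_first_zero x i -> x 0 i = 0 by case/andP => /eqP.
have fz_before i j : is_first_zero x i -> (j < i)%N -> x 0 j = 1.
  by case/andP => _ /forallP /(_ j) /implyP H /H /eqP.
have compl i : (1 - x 0 i) * (1 - \sum_j first_zero x 0 j) = 0.
  rewrite sum_first_zero //; case: existsP => [_|x_ones]; first by rewrite subrr mulr0.
  case: (x01 i) => [xi0|->]; last by rewrite subrr mul0r.
  by case: x_ones; exists i; rewrite xi0.
split; [|split; [|split; [|split; [|split; [|split]]]]].
- by split=> //; split; [|split] => // i; case: (x01 i) => ->.
- split; first by move=> i; exists (is_first_zero x i : nat); rewrite yE.
  by rewrite sum_first_zero //; case: existsP.
- by move=> i; rewrite compl.
- by move=> i; rewrite compl oppr0.
- move=> i; rewrite yE; have [fzi|_] := boolP (is_first_zero x i).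
    by rewrite !mulr1 subr_ge0 x_h // fz0.
  by rewrite !mulr0 subrr.
- move=> i; rewrite yE; have [fzi|_] := boolP (is_first_zero x i).
    by rewrite fz0 // mul0r oppr0.
  by rewrite mulr0 oppr0.
- move=> i j ij; rewrite yE; have [fzj|_] := boolP (is_first_zero x j).
    by rewrite (fz_before j i) // subrr mul0r oppr0.
  by rewrite mulr0 oppr0.
Qed.

Lemma Sc_Fc_relax z x y : Sc p h ((z, x, y) : pt_zxy R m) -> Fc_relax z x.
Proof.
case=> [[z_ge0 [x_ge0 [x_le1 x_sum]]] [[y_nat _] [c1 [c2 [c3 [_ c5]]]]]].
split=> // i xi_neq1.
have xi_lt1 : x 0 i < 1 by rewrite lt_def eq_sym xi_neq1 x_le1.
have y_sum1 : \sum_j y 0 j = 1.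
  have /eqP : (1 - x 0 i) * (1 - \sum_j y 0 j) = 0.
    by apply/le_anti; rewrite -oppr_ge0 c2 c1.
  by rewrite mulf_eq0 !subr_eq0 eq_sym (negbTE xi_neq1) eq_sym => /eqP.
have [k yk_gt0] : exists k, 0 < y 0 k.
  case: (pickP (fun k => y 0 k != 0)) => [k yk|y0]; last first.
    by move: y_sum1; rewrite big1 => [/eqP|k _]; [rewrite eq_sym oner_eq0 | apply/eqP/negbFE].
  by exists k; case: (y_nat k) => n yn; rewrite lt_def yk yn ler0n.
have hk_le_z : h k <= z by have := c3 k; nra.
case: (ltnP i k) => [ik|ki]; first by have := c5 i k ik; nra.
exact: le_trans (h_antitone ki) hk_le_z.
Qed.


End MixingSet.

Theorem mainTheorem7 (R : realFieldType) (m p : nat) (h : 'I_m -> R)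
  (hm : (1 <= m)%N) (hp1 : (1 <= p)%N) (hpm : (p <= m)%N)
  (hmono : forall i j : 'I_m, (i <= j)%N -> h j <= h i)
  (hnn : forall i, 0 <= h i) :
  forall (z : R) (x : 'rV[R]_m),
    conv (Fc p h) ((z, x) : pt_zx R m) <->
    exists y : 'rV[R]_m, conv (Sc p h) ((z, x, y) : pt_zxy R m).
Proof.
move=> z x; split.
  apply: (conv_lift (g := fun v : pt_zx R m => first_zero v.2)) => -[z' x'].
  exact: Fc_lift_Sc.
case=> y; apply: conv_proj => -[z' x'] y' /(Sc_Fc_relax hmono).
exact: Fc_relax_conv_Fc.
Qed.
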